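(* The sequent calculi $G(\mathbf{K4}_h)$, $G(\mathbf{KD4}_h)$ and $G(\mathbf{S4}_h)$ have the cut elimination property: every sequent provable in one of these systems has a proof in the same system that does not use the cut rule.
   Context: The language $\mathcal{L}_\infty$ consists of modal formulas built from propositional atoms, $\bot,\top$, the connectives $\neg,\wedge,\vee,\rightarrow$ and infinitely many unary modalities $\Box_n$ ($n\in\mathbb{N}$), with the restriction that $\Box_n A$ is a formula only if $n$ is strictly greater than the index of every box occurring in $A$. All formulas are in $\mathcal{L}_\infty$. Sequent calculi: sequents $\Gamma\Rightarrow\Delta$ with finite multisets. All three systems contain the axioms $A\Rightarrow A$ and $\bot\Rightarrow$, the structural rules of left/right weakening, left/right contraction and cut (from $\Gamma_0\Rightarrow\Delta_0,A$ and $\Gamma_1,A\Rightarrow\Delta_1$ infer $\Gamma_0,\Gamma_1\Rightarrow\Delta_0,\Delta_1$), and the usual classical (LK-style) left and right rules for $\wedge,\vee,\rightarrow,\neg$. Modal rules (in each, the side condition is $n_i<n$ for all $i\in I$): $\Box_{4_h}R$: from $\{\sigma_r\}_{r\in R},\{\gamma_i,\Box_{n_i}\gamma_i\}_{i\in I}\Rightarrow A$ infer $\{\Box_n\sigma_r\}_{r\in R},\{\Box_{n_i}\gamma_i\}_{i\in I}\Rightarrow\Box_nA$; $\Box_{D_h}R$: from $\{\sigma_r\}_{r\in R},\{\gamma_i,\Box_{n_i}\gamma_i\}_{i\in I}\Rightarrow$ infer $\{\Box_n\sigma_r\}_{r\in R},\{\Box_{n_i}\gamma_i\}_{i\in I}\Rightarrow$;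 $\Box_{S_h}R$: from $\{\sigma_r\}_{r\in R},\{\Box_{n_i}\gamma_i\}_{i\in I}\Rightarrow A$ infer $\{\Box_n\sigma_r\}_{r\in R},\{\Box_{n_i}\gamma_i\}_{i\in I}\Rightarrow\Box_nA$; $\Box_hL$: from $\Gamma,A\Rightarrow\Delta$ infer $\Gamma,\Box_nA\Rightarrow\Delta$. $G(\mathbf{K4}_h)$ = axioms + structural + propositional rules + $\Box_{4_h}R$; $G(\mathbf{KD4}_h)$ = $G(\mathbf{K4}_h)$ + $\Box_{D_h}R$; $G(\mathbf{S4}_h)$ = axioms + structural + propositional rules + $\Box_{S_h}R$ + $\Box_hL$. *)

From Stdlib Require Import List Permutation Arith.
Import ListNotations.

Inductive form : Type :=
| Atom : nat -> form
| Bot : form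
| Top : form
| Neg : form -> form
| And : form -> form -> form
| Or  : form -> form -> form
| Imp : form -> form -> form
| Box : nat -> form -> form.

Fixpoint boxes_lt (n : nat) (A : form) : Prop :=
  match A with
  | Atom _ | Bot | Top => True
  | Neg B => boxes_lt n B
  | And B C | Or B C | Imp B C => boxes_lt n B /\ boxes_lt n C
  | Box m B => m < n /\ boxes_lt n B
  end.

(** Membership in L_infty: [Box n A] is a formula only if [A] is one and
    [n] exceeds the index of every box occurring in [A]. *)
Fixpoint wf (A : form) : Prop :=
  match A with
  | Atom _ | Bot | Top => True
  | Neg B => wf B
  | And B C | Or B C | Imp B C => wf B /\ wf C
  | Box n B => wf B /\ boxes_lt n B
  end.

(** Sequents: pairs of finite multisets, represented as lists taken up to
    permutation (see rule [r_perm]). *)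
Definition sequent : Type := (list form * list form)%type.

Definition wf_seq (s : sequent) : Prop :=
  Forall wf (fst s) /\ Forall wf (snd s).

Inductive system : Type := K4h | KD4h | S4h.

Definition has_4 (S : system) : bool :=
  match S with K4h | KD4h => true | S4h => false end.
Definition has_D (S : system) : bool :=
  match S with KD4h => true | _ => false end.
Definition has_S (S : system) : bool :=
  match S with S4h => true | _ => false end.

Definition boxed (gs : list (nat * form)) : list form :=
  map (fun p => Box (fst p) (snd p)) gs.
Definition unboxed_and_boxed (gs : list (nat * form)) : list form :=
  flat_map (fun p => [snd p; Box (fst p) (snd p)]) gs.
Definition idx_below (n : nat) (gs : list (nat * form)) : Prop :=
  Forall (fun p => fst p < n) gs.

Inductive Rule (S : system) (c : bool) : list sequent -> sequent -> Prop :=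
| r_perm G D G' D' :
    Permutation G G' -> Permutation D D' ->
    Rule S c [(G, D)] (G', D')
| r_id A : Rule S c [] ([A], [A])
| r_bot : Rule S c [] ([Bot], [])
| r_wL G D A : Rule S c [(G, D)] (A :: G, D)
| r_wR G D A : Rule S c [(G, D)] (G, D ++ [A])
| r_cL G D A : Rule S c [(A :: A :: G, D)] (A :: G, D)
| r_cR G D A : Rule S c [(G, D ++ [A; A])] (G, D ++ [A])
| r_cut G0 D0 G1 D1 A :
    c = true ->
    Rule S c [(G0, D0 ++ [A]); (A :: G1, D1)] (G0 ++ G1, D0 ++ D1)
| r_andL1 G D A B : Rule S c [(A :: G, D)] (And A B :: G, D)
| r_andL2 G D A B : Rule S c [(B :: G, D)] (And A B :: G, D)
| r_andR G D A B :
    Rule S c [(G, D ++ [A]); (G, D ++ [B])] (G, D ++ [And A B])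
| r_orL G D A B :
    Rule S c [(A :: G, D); (B :: G, D)] (Or A B :: G, D)
| r_orR1 G D A B : Rule S c [(G, D ++ [A])] (G, D ++ [Or A B])
| r_orR2 G D A B : Rule S c [(G, D ++ [B])] (G, D ++ [Or A B])
| r_impL G0 D0 G1 D1 A B :
    Rule S c [(G0, D0 ++ [A]); (B :: G1, D1)] (Imp A B :: G0 ++ G1, D0 ++ D1)
| r_impR G D A B : Rule S c [(A :: G, D ++ [B])] (G, D ++ [Imp A B])
| r_negL G D A : Rule S c [(G, D ++ [A])] (Neg A :: G, D)
| r_negR G D A : Rule S c [(A :: G, D)] (G, D ++ [Neg A])
| r_box4R n (sig : list form) (gs : list (nat * form)) A :
    has_4 S = true -> idx_below n gs ->
    Rule S c [(sig ++ unboxed_and_boxed gs, [A])]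
             (map (Box n) sig ++ boxed gs, [Box n A])
| r_boxDR n (sig : list form) (gs : list (nat * form)) :
    has_D S = true -> idx_below n gs ->
    Rule S c [(sig ++ unboxed_and_boxed gs, [])]
             (map (Box n) sig ++ boxed gs, [])
| r_boxSR n (sig : list form) (gs : list (nat * form)) A :
    has_S S = true -> idx_below n gs ->
    Rule S c [(sig ++ boxed gs, [A])]
             (map (Box n) sig ++ boxed gs, [Box n A])
| r_boxL n G D A :
    has_S S = true ->
    Rule S c [(A :: G, D)] (Box n A :: G, D).

Inductive Der (S : system) (c : bool) : sequent -> Prop :=
| der ps s :
    Rule S c ps s -> wf_seq s ->
    (forall p, In p ps -> Der S c p) ->
    Der S c s.

From Stdlib Require Import List Permutation Arith Lia.
Import ListNotations.

(** Cut is eliminated through Gentzen's mix rule: from [G0 => D0] and [G1 => D1]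
    infer [G0, G1 - A => D0 - A, D1], where [- A] deletes every occurrence of [A];
    deleting all occurrences at once is what lets mix commute with contraction.
    Mix on [A] is proved by induction on [A].  The occurrences of [A] are first traced
    up the left derivation until the rule introducing them is reached.  For a
    connective, the right derivation is inverted and mix is applied to the immediate
    subformulas.  For [A = Box_n B], the occurrences of [Box_n B] are traced up the right
    derivation; the only rules in which they are principal are [Box_hL], handled by mix
    on [B], and the modal right rules [Box_m], whose index condition is what makes the
    reduction work.  The [S4_h] rule is treated like the other two after adding the
    unboxed [gamma_i] to its premise, which [Box_hL] can absorb again. *)

Definition form_eq_dec (A B : form) : {A = B} + {A <> B}.
Proof. decide equality; apply Nat.eq_dec. Defined.

Definition rem (A : form) (l : list form) : list form := remove form_eq_dec A l.

Lemma in_rem A x l : In x (rem A l) <-> In x l /\ x <> A.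
Proof. split; [apply in_remove | intros []; apply in_in_remove; assumption]. Qed.

Lemma in_rem_intro A x l : In x l -> x <> A -> In x (rem A l).
Proof. intros; apply in_rem; auto. Qed.

Section Structural.
Variables (S : system) (c : bool).

Lemma der_wf s : Der S c s -> wf_seq s.
Proof. now intros []. Qed.

Lemma der_rule0 s : Rule S c [] s -> wf_seq s -> Der S c s.
Proof. intros r w; apply (der _ _ [] s r w); intros p []. Qed.

Lemma der_rule1 p s : Rule S c [p] s -> wf_seq s -> Der S c p -> Der S c s.
Proof. intros r w d; apply (der _ _ [p] s r w); intros q [<-|[]]; exact d. Qed.

Lemma der_rule2 p1 p2 s :
  Rule S c [p1; p2] s -> wf_seq s -> Der S c p1 -> Der S c p2 -> Der S c s.
Proof. intros r w d1 d2; apply (der _ _ [p1; p2] s r w); intros q [<-|[<-|[]]]; assumption. Qed.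

Lemma der_id A : wf A -> Der S c ([A], [A]).
Proof. intros w; apply der_rule0; [apply r_id | split; simpl; auto]. Qed.

Lemma der_perm G D G' D' :
  Permutation G G' -> Permutation D D' -> Der S c (G, D) -> Der S c (G', D').
Proof.
  intros pG pD d; apply der_rule1 with (G, D); [now apply r_perm | | exact d].
  destruct (der_wf _ d) as [wG wD]; split; simpl in *.
  - now rewrite <- pG.
  - now rewrite <- pD.
Qed.

Lemma der_weakenL G D Z : Forall wf Z -> Der S c (G, D) -> Der S c (Z ++ G, D).
Proof.
  intros wZ d; induction wZ as [|A Z wA wZ IH]; [exact d|].
  apply der_rule1 with (Z ++ G, D); [apply r_wL | | exact IH].
  destruct (der_wf _ IH); split; simpl; auto.
Qed.

Lemma der_weakenR G D Z : Forall wf Z -> Der S c (G, D) -> Der S c (G, Z ++ D).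
Proof.
  intros wZ d; induction wZ as [|A Z wA wZ IH]; [exact d|].
  apply der_perm with G ((Z ++ D) ++ [A]);
    [reflexivity | symmetry; apply Permutation_cons_append |].
  apply der_rule1 with (G, Z ++ D); [apply r_wR | | exact IH].
  destruct (der_wf _ IH); split; simpl; auto.
  apply Forall_app; auto.
Qed.

Lemma der_contractL G D A : In A G -> Der S c (A :: G, D) -> Der S c (G, D).
Proof.
  intros HA d; apply in_split in HA as (G1 & G2 & ->).
  apply der_perm with (A :: G1 ++ G2) D; [apply Permutation_middle | reflexivity |].
  apply der_rule1 with (A :: A :: G1 ++ G2, D); [apply r_cL | |].
  - destruct (der_wf _ d) as [wG wD]; split; simpl in *; auto.
    apply (incl_Forall (l1 := A :: G1 ++ A :: G2)); [|exact wG].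
    intros x; simpl; rewrite !in_app_iff; simpl; tauto.
  - apply der_perm with (A :: G1 ++ A :: G2) D; [| reflexivity | exact d].
    apply perm_skip; symmetry; apply Permutation_middle.
Qed.

Lemma der_contractR G D A : In A D -> Der S c (G, A :: D) -> Der S c (G, D).
Proof.
  intros HA d; apply in_split in HA as (D1 & D2 & ->).
  apply der_perm with G ((D1 ++ D2) ++ [A]);
    [reflexivity | rewrite <- app_assoc; apply Permutation_app_head;
                   symmetry; apply Permutation_cons_append |].
  apply der_rule1 with (G, (D1 ++ D2) ++ [A; A]); [apply r_cR | |].
  - destruct (der_wf _ d) as [wG wD]; split; simpl in *; auto.
    apply (incl_Forall (l1 := A :: D1 ++ A :: D2)); [|exact wD].
    intros x; simpl; rewrite !in_app_iff; simpl; tauto.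
  - apply der_perm with G (A :: D1 ++ A :: D2); [reflexivity | | exact d].
    now rewrite <- Permutation_middle, (Permutation_app_comm _ [A; A]).
Qed.

Lemma der_incl G D G' D' :
  Der S c (G, D) -> incl G G' -> incl D D' -> Forall wf G' -> Forall wf D' ->
  Der S c (G', D').
Proof.
  intros d iG iD wG' wD'.
  assert (contractL : forall X, incl X G' -> Der S c (X ++ G', D') -> Der S c (G', D')).
  { induction X as [|A X IH]; intros iX dX; [exact dX|].
    apply IH; [intros x Hx; apply iX; now right|].
    apply der_contractL with A; [apply in_or_app; right; apply iX; now left | exact dX]. }
  assert (contractR : forall X, incl X D' -> Der S c (G, X ++ D') -> Der S c (G, D')).
  { induction X as [|A X IH]; intros iX dX; [exact dX|].
    apply IH; [intros x Hx; apply iX; now right|].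
    apply der_contractR with A; [apply in_or_app; right; apply iX; now left | exact dX]. }
  apply contractL with G; [exact iG|].
  apply der_perm with (G' ++ G) D'; [apply Permutation_app_comm | reflexivity |].
  apply der_weakenL; [exact wG'|].
  apply contractR with D; [exact iD|].
  apply der_perm with G (D' ++ D); [reflexivity | apply Permutation_app_comm |].
  now apply der_weakenR.
Qed.

End Structural.

Definition with_index (n : nat) (sig : list form) : list (nat * form) :=
  map (fun y => (n, y)) sig.

Definition remove_boxed (A : form) (gs : list (nat * form)) : list (nat * form) :=
  filter (fun p => if form_eq_dec (Box (fst p) (snd p)) A then false else true) gs.

Lemma in_boxed x gs : In x (boxed gs) <-> exists k g, In (k, g) gs /\ x = Box k g.
Proof.
  unfold boxed; rewrite in_map_iff; split.
  - intros [[k g] [<- H]]; eauto.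
  - intros (k & g & H & ->); now exists (k, g).
Qed.

Lemma in_unboxed_and_boxed x gs :
  In x (unboxed_and_boxed gs) <-> exists k g, In (k, g) gs /\ (x = g \/ x = Box k g).
Proof.
  unfold unboxed_and_boxed; rewrite in_flat_map; split.
  - intros [[k g] [H Hx]]; simpl in Hx; exists k, g; intuition.
  - intros (k & g & H & [-> | ->]); exists (k, g); simpl; auto.
Qed.

Lemma in_with_index k g n sig : In (k, g) (with_index n sig) <-> k = n /\ In g sig.
Proof.
  unfold with_index; rewrite in_map_iff; split.
  - now intros (y & [= -> ->] & H).
  - intros [-> H]; eauto.
Qed.

Lemma in_remove_boxed A k g gs :
  In (k, g) (remove_boxed A gs) <-> In (k, g) gs /\ Box k g <> A.
Proof.
  unfold remove_boxed; rewrite filter_In; cbn [fst snd].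
  destruct (form_eq_dec (Box k g) A); intuition congruence.
Qed.

Lemma in_map_snd (g : form) (gs : list (nat * form)) :
  In g (map snd gs) <-> exists k, In (k, g) gs.
Proof.
  rewrite in_map_iff; split.
  - intros ([k g'] & <- & H); eauto.
  - intros [k H]; now exists (k, g).
Qed.

Lemma in_map_snd_intro k (g : form) (gs : list (nat * form)) :
  In (k, g) gs -> In g (map snd gs).
Proof. intros; apply in_map_snd; eauto. Qed.

Lemma in_map_Box n y sig : In y sig -> In (Box n y) (map (Box n) sig).
Proof. apply in_map. Qed.

Lemma in_boxed_intro k g gs : In (k, g) gs -> In (Box k g) (boxed gs).
Proof. intros; apply in_boxed; eauto. Qed.

Lemma in_unboxed k g gs : In (k, g) gs -> In g (unboxed_and_boxed gs).
Proof. intros; apply in_unboxed_and_boxed; eauto. Qed.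

Lemma in_unboxed_boxed k g gs : In (k, g) gs -> In (Box k g) (unboxed_and_boxed gs).
Proof. intros; apply in_unboxed_and_boxed; eauto. Qed.

Lemma in_with_index_intro n g sig : In g sig -> In (n, g) (with_index n sig).
Proof. intros; now apply in_with_index. Qed.

Lemma in_remove_boxed_intro A k g gs :
  In (k, g) gs -> Box k g <> A -> In (k, g) (remove_boxed A gs).
Proof. intros; now apply in_remove_boxed. Qed.

Lemma Forall_wf_map_Box n l : Forall wf (map (Box n) l) -> Forall wf l.
Proof. rewrite !Forall_forall; intros H x Hx; apply (H (Box n x)), in_map, Hx. Qed.

Lemma Forall_wf_unboxed_and_boxed gs :
  Forall wf (boxed gs) -> Forall wf (unboxed_and_boxed gs).
Proof.
  rewrite !Forall_forall; intros H x (k & g & Hg & [-> | ->])%in_unboxed_and_boxed;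
    [apply (H (Box k g)) | apply H]; now apply in_boxed_intro.
Qed.

Lemma idx_below_lt m gs k g : idx_below m gs -> In (k, g) gs -> k < m.
Proof. intros idx H; exact (proj1 (Forall_forall _ _) idx _ H). Qed.

Lemma idx_below_mono n m gs : n <= m -> idx_below n gs -> idx_below m gs.
Proof. intros Hnm; apply Forall_impl; intros p; lia. Qed.

Lemma idx_below_with_index n m sig : n < m -> idx_below m (with_index n sig).
Proof. intros Hnm; apply Forall_forall; intros [k g] [-> _]%in_with_index; exact Hnm. Qed.

Lemma idx_below_remove_boxed m A gs : idx_below m gs -> idx_below m (remove_boxed A gs).
Proof. apply incl_Forall, incl_filter. Qed.

Create HintDb mem discriminated.
#[local] Hint Resolve in_eq in_cons in_rem_intro in_map_Box in_boxed_intro in_unboxed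
  in_unboxed_boxed in_with_index_intro in_remove_boxed_intro in_map_snd_intro : mem.
#[local] Hint Extern 1 (wf _) => progress cbn [wf]; try split : mem.
#[local] Hint Extern 1 (In _ (_ ++ _)) => apply in_or_app; left : mem.
#[local] Hint Extern 1 (In _ (_ ++ _)) => apply in_or_app; right : mem.
#[local] Hint Extern 1 (_ <> _) => congruence : mem.

Ltac in_elim :=
  repeat match goal with
  | H : In _ (_ ++ _) |- _ => apply in_app_or in H as [H | H]
  | H : In _ (_ :: _) |- _ => destruct H as [H | H]
  | H : In _ [] |- _ => destruct H
  | H : In _ (rem _ _) |- _ => apply in_rem in H as [H ?]
  | H : In _ (boxed _) |- _ => apply in_boxed in H as (? & ? & H & ?)
  | H : In _ (unboxed_and_boxed _) |- _ =>
      apply in_unboxed_and_boxed in H as (? & ? & H & [? | ?])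
  | H : In _ (map (Box _) _) |- _ => apply in_map_iff in H as (? & ? & H)
  | H : In _ (map snd _) |- _ => apply in_map_snd in H as (? & H)
  | H : In (_, _) (with_index _ _) |- _ => apply in_with_index in H as [? H]
  | H : In (_, _) (remove_boxed _ _) |- _ => apply in_remove_boxed in H as [H ?]
  | H : Box _ _ = Box _ _ |- _ => injection H as ? ?
  | H : _ = _ |- _ => subst
  end.

Ltac split_on_rem x :=
  repeat match goal with
  | |- context [rem ?A _] =>
      lazymatch goal with
      | _ : x = A |- _ => fail
      | _ : x <> A |- _ => fail
      | _ => destruct (form_eq_dec x A)
      end
  end.

Ltac incl_solve :=
  let x := fresh "x" in let Hx := fresh "Hx" in
  intros x Hx; split_on_rem x; in_elim;
  first [exfalso; congruence | contradiction | solve [eauto 10 with mem nocore]].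

Ltac wf_gather :=
  repeat match goal with d : Der _ _ _ |- _ => apply der_wf in d end;
  repeat match goal with
  | H : wf_seq _ |- _ => destruct H as [? ?]; cbn [fst snd] in *
  | H : Forall wf (_ ++ _) |- _ => apply Forall_app in H as [? ?]
  | H : Forall wf (_ :: _) |- _ => apply Forall_cons_iff in H as [? ?]
  | H : wf (Neg _) |- _ => simpl in H
  | H : wf (And _ _) |- _ => destruct H
  | H : wf (Or _ _) |- _ => destruct H
  | H : wf (Imp _ _) |- _ => destruct H
  | H : wf (Box _ _) |- _ => destruct H
  | H : Forall wf (map (Box _) ?l) |- _ =>
      lazymatch goal with _ : Forall wf l |- _ => fail
      | _ => pose proof (Forall_wf_map_Box _ _ H) end
  | H : Forall wf (boxed ?gs) |- _ =>
      lazymatch goal with _ : Forall wf (unboxed_and_boxed gs) |- _ => fail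
      | _ => pose proof (Forall_wf_unboxed_and_boxed _ H) end
  end.

Ltac wf_solve :=
  cbn [fst snd]; wf_gather; rewrite ?Forall_forall in *;
  lazymatch goal with
  | |- forall _, _ =>
      let x := fresh "x" in let Hx := fresh "Hx" in
      intros x Hx; in_elim; first [exfalso; congruence | solve [eauto 10 with mem nocore]]
  | |- _ => solve [eauto with mem nocore]
  end.

Ltac by_incl d :=
  apply (der_incl _ _ _ _ _ _ d); [incl_solve | incl_solve | wf_solve | wf_solve].

Ltac by_rule R d :=
  eapply der_incl;
  [apply (der_rule1 _ _ _ _ R); [split; wf_solve | by_incl d]
  | incl_solve | incl_solve | wf_solve | wf_solve].

Ltac by_rule2 R d1 d2 :=
  eapply der_incl;
  [apply (der_rule2 _ _ _ _ _ R); [split; wf_solve | by_incl d1 | by_incl d2]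
  | incl_solve | incl_solve | wf_solve | wf_solve].

Lemma der_boxL_absorb S c X G D :
  has_S S = true -> (forall x, In x X -> exists k, In (Box k x) G) ->
  Der S c (X ++ G, D) -> Der S c (G, D).
Proof.
  intros hS; induction X as [|A X IH]; intros HX d; [exact d|].
  apply IH; [intros x Hx; apply HX; now right|].
  destruct (HX A (in_eq _ _)) as [k Hk].
  apply der_contractL with (Box k A); [apply in_or_app; now right|].
  apply der_rule1 with (A :: X ++ G, D); [now apply r_boxL | | exact d].
  split; wf_solve.
Qed.

Lemma der_unbox_gammas S c sig gs D :
  has_S S = true -> Der S c (sig ++ unboxed_and_boxed gs, D) -> Der S c (sig ++ boxed gs, D).
Proof.
  intros hS d; apply der_boxL_absorb with (map snd gs); [exact hS | |].
  - intros x [k H]%in_map_snd; exists k; auto with mem.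
  - by_incl d.
Qed.

Definition box_rule_succedent (S : system) (Th : list form) : Prop :=
  match Th with
  | [] => has_D S = true
  | [_] => True
  | _ => False
  end.

Lemma der_box_right S c m sig gs Th :
  box_rule_succedent S Th -> idx_below m gs ->
  wf_seq (map (Box m) sig ++ boxed gs, map (Box m) Th) ->
  Der S c (sig ++ unboxed_and_boxed gs, Th) ->
  Der S c (map (Box m) sig ++ boxed gs, map (Box m) Th).
Proof.
  intros hTh idx w d.
  destruct Th as [|C [|]]; [| | contradiction]; destruct S; simpl in hTh; try discriminate.
  - apply der_rule1 with (2 := w) (3 := d); now apply r_boxDR.
  - apply der_rule1 with (2 := w) (3 := d); now apply r_box4R.
  - apply der_rule1 with (2 := w) (3 := d); now apply r_box4R.
  - apply der_rule1 with (sig ++ boxed gs, [C]); [now apply r_boxSR | exact w |].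
    now apply der_unbox_gammas.
Qed.

Ltac name_premises Hps IH :=
  try (pose proof (Hps _ (or_introl eq_refl)) as P1;
       pose proof (IH _ (or_introl eq_refl)) as I1; cbn [fst snd] in P1, I1);
  try (pose proof (Hps _ (or_intror (or_introl eq_refl))) as P2;
       pose proof (IH _ (or_intror (or_introl eq_refl))) as I2; cbn [fst snd] in P2, I2);
  clear Hps IH.

(* Deleting the occurrences of [A] commutes with every rule in which [A] is not
   principal; the hypotheses [principal_*] supply the remaining cases. *)
Section RemoveAntecedent.
Variables (S : system) (A : form) (Gx Dx : list form).
Hypotheses (wf_Gx : Forall wf Gx) (wf_Dx : Forall wf Dx).

Hypothesis principal_id : wf A -> Der S false (Gx, A :: Dx).
Hypothesis principal_bot : A = Bot -> Der S false (Gx, Dx).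
Hypothesis principal_andL1 : forall P Q G D, A = And P Q -> wf_seq (A :: G, D) ->
  Der S false (Gx ++ rem A (P :: G), D ++ Dx) -> Der S false (Gx ++ rem A G, D ++ Dx).
Hypothesis principal_andL2 : forall P Q G D, A = And P Q -> wf_seq (A :: G, D) ->
  Der S false (Gx ++ rem A (Q :: G), D ++ Dx) -> Der S false (Gx ++ rem A G, D ++ Dx).
Hypothesis principal_orL : forall P Q G D, A = Or P Q -> wf_seq (A :: G, D) ->
  Der S false (Gx ++ rem A (P :: G), D ++ Dx) -> Der S false (Gx ++ rem A (Q :: G), D ++ Dx) ->
  Der S false (Gx ++ rem A G, D ++ Dx).
Hypothesis principal_impL : forall P Q G0 D0 G1 D1, A = Imp P Q ->
  wf_seq (A :: G0 ++ G1, D0 ++ D1) ->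
  Der S false (Gx ++ rem A G0, (D0 ++ [P]) ++ Dx) ->
  Der S false (Gx ++ rem A (Q :: G1), D1 ++ Dx) ->
  Der S false (Gx ++ rem A (G0 ++ G1), (D0 ++ D1) ++ Dx).
Hypothesis principal_negL : forall P G D, A = Neg P -> wf_seq (A :: G, D) ->
  Der S false (Gx ++ rem A G, (D ++ [P]) ++ Dx) -> Der S false (Gx ++ rem A G, D ++ Dx).
Hypothesis principal_boxL : forall n P G D, A = Box n P -> has_S S = true ->
  wf_seq (A :: G, D) ->
  Der S false (Gx ++ rem A (P :: G), D ++ Dx) -> Der S false (Gx ++ rem A G, D ++ Dx).
Hypothesis principal_box : forall m sig gs Th, box_rule_succedent S Th -> idx_below m gs ->
  In A (map (Box m) sig ++ boxed gs) ->
  wf_seq (map (Box m) sig ++ boxed gs, map (Box m) Th) ->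
  Der S false (sig ++ unboxed_and_boxed gs, Th) ->
  Der S false (Gx ++ rem A (sig ++ unboxed_and_boxed gs), Th ++ Dx) ->
  Der S false (Gx ++ rem A (map (Box m) sig ++ boxed gs), map (Box m) Th ++ Dx).

Lemma remove_antecedent_occurrences G D :
  Der S false (G, D) -> Der S false (Gx ++ rem A G, D ++ Dx).
Proof.
  enough (H : forall s, Der S false s -> Der S false (Gx ++ rem A (fst s), snd s ++ Dx))
    by exact (H (G, D)).
  clear G D; induction 1 as [ps s r ws Hps IH].
  pose proof (der _ _ ps s r ws Hps) as d.
  destruct r as [G D G' D' pG pD | B | | G D B | G D B | G D B | G D B | G0 D0 G1 D1 B cut
    | G D B C | G D B C | G D B C | G D B C | G D B C | G D B C | G0 D0 G1 D1 B C | G D B C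
    | G D B | G D B | n sig gs B h idx | n sig gs h idx | n sig gs B h idx | n G D B h];
    cbn [fst snd] in *; name_premises Hps IH.
  - apply (der_incl _ _ _ _ _ _ I1); [| | wf_solve | wf_solve];
      apply incl_app_app; try apply incl_refl.
    + unfold rem; apply remove_incl; intros x; now apply Permutation_in.
    + intros x; now apply Permutation_in.
  - destruct (form_eq_dec B A) as [<- | ne].
    + by_incl (principal_id ltac:(wf_solve)).
    + by_incl d.
  - destruct (form_eq_dec Bot A) as [<- | ne].
    + by_incl (principal_bot eq_refl).
    + by_incl d.
  - by_incl I1.
  - by_incl I1.
  - by_incl I1.
  - by_incl I1.
  - discriminate.
  - destruct (form_eq_dec (And B C) A) as [<- | ne].
    + by_incl (principal_andL1 B C G D eq_refl ws I1).
    + by_rule (r_andL1 S false (Gx ++ rem A G) (D ++ Dx) B C) I1.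
  - destruct (form_eq_dec (And B C) A) as [<- | ne].
    + by_incl (principal_andL2 B C G D eq_refl ws I1).
    + by_rule (r_andL2 S false (Gx ++ rem A G) (D ++ Dx) B C) I1.
  - by_rule2 (r_andR S false (Gx ++ rem A G) (D ++ Dx) B C) I1 I2.
  - destruct (form_eq_dec (Or B C) A) as [<- | ne].
    + by_incl (principal_orL B C G D eq_refl ws I1 I2).
    + by_rule2 (r_orL S false (Gx ++ rem A G) (D ++ Dx) B C) I1 I2.
  - by_rule (r_orR1 S false (Gx ++ rem A G) (D ++ Dx) B C) I1.
  - by_rule (r_orR2 S false (Gx ++ rem A G) (D ++ Dx) B C) I1.
  - destruct (form_eq_dec (Imp B C) A) as [<- | ne].
    + by_incl (principal_impL B C G0 D0 G1 D1 eq_refl ws I1 I2).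
    + by_rule2 (r_impL S false (Gx ++ rem A G0) (D0 ++ Dx) (Gx ++ rem A G1) (D1 ++ Dx) B C)
        I1 I2.
  - by_rule (r_impR S false (Gx ++ rem A G) (D ++ Dx) B C) I1.
  - destruct (form_eq_dec (Neg B) A) as [<- | ne].
    + by_incl (principal_negL B G D eq_refl ws I1).
    + by_rule (r_negL S false (Gx ++ rem A G) (D ++ Dx) B) I1.
  - by_rule (r_negR S false (Gx ++ rem A G) (D ++ Dx) B) I1.
  - destruct (in_dec form_eq_dec A (map (Box n) sig ++ boxed gs)) as [Hin | Hnin].
    + exact (principal_box n sig gs [B] I idx Hin ws P1 I1).
    + unfold rem; rewrite (notin_remove _ _ _ Hnin); by_incl d.
  - destruct (in_dec form_eq_dec A (map (Box n) sig ++ boxed gs)) as [Hin | Hnin].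
    + exact (principal_box n sig gs [] h idx Hin ws P1 I1).
    + unfold rem; rewrite (notin_remove _ _ _ Hnin); by_incl d.
  - destruct (in_dec form_eq_dec A (map (Box n) sig ++ boxed gs)) as [Hin | Hnin].
    + apply (principal_box n sig gs [B] I idx Hin ws); [by_incl P1 | by_incl I1].
    + unfold rem; rewrite (notin_remove _ _ _ Hnin); by_incl d.
  - destruct (form_eq_dec (Box n B) A) as [<- | ne].
    + by_incl (principal_boxL n B G D eq_refl h ws I1).
    + by_rule (r_boxL S false n (Gx ++ rem A G) (D ++ Dx) B h) I1.
Qed.

End RemoveAntecedent.

Section RemoveSuccedent.
Variables (S : system) (A : form) (Gx Dx : list form).
Hypotheses (wf_Gx : Forall wf Gx) (wf_Dx : Forall wf Dx).

Hypothesis principal_id : wf A -> Der S false (A :: Gx, Dx).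
Hypothesis principal_andR : forall P Q G D, A = And P Q -> wf_seq (G, D ++ [A]) ->
  Der S false (G ++ Gx, rem A (D ++ [P]) ++ Dx) ->
  Der S false (G ++ Gx, rem A (D ++ [Q]) ++ Dx) -> Der S false (G ++ Gx, rem A D ++ Dx).
Hypothesis principal_orR1 : forall P Q G D, A = Or P Q -> wf_seq (G, D ++ [A]) ->
  Der S false (G ++ Gx, rem A (D ++ [P]) ++ Dx) -> Der S false (G ++ Gx, rem A D ++ Dx).
Hypothesis principal_orR2 : forall P Q G D, A = Or P Q -> wf_seq (G, D ++ [A]) ->
  Der S false (G ++ Gx, rem A (D ++ [Q]) ++ Dx) -> Der S false (G ++ Gx, rem A D ++ Dx).
Hypothesis principal_impR : forall P Q G D, A = Imp P Q -> wf_seq (G, D ++ [A]) ->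
  Der S false ((P :: G) ++ Gx, rem A (D ++ [Q]) ++ Dx) -> Der S false (G ++ Gx, rem A D ++ Dx).
Hypothesis principal_negR : forall P G D, A = Neg P -> wf_seq (G, D ++ [A]) ->
  Der S false ((P :: G) ++ Gx, rem A D ++ Dx) -> Der S false (G ++ Gx, rem A D ++ Dx).
Hypothesis principal_box : forall n sig gs C, A = Box n C -> idx_below n gs ->
  wf_seq (map (Box n) sig ++ boxed gs, [A]) -> Der S false (sig ++ unboxed_and_boxed gs, [C]) ->
  Der S false ((map (Box n) sig ++ boxed gs) ++ Gx, Dx).

Lemma remove_succedent_occurrences G D :
  Der S false (G, D) -> Der S false (G ++ Gx, rem A D ++ Dx).
Proof.
  enough (H : forall s, Der S false s -> Der S false (fst s ++ Gx, rem A (snd s) ++ Dx))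
    by exact (H (G, D)).
  clear G D; induction 1 as [ps s r ws Hps IH].
  pose proof (der _ _ ps s r ws Hps) as d.
  destruct r as [G D G' D' pG pD | B | | G D B | G D B | G D B | G D B | G0 D0 G1 D1 B cut
    | G D B C | G D B C | G D B C | G D B C | G D B C | G D B C | G0 D0 G1 D1 B C | G D B C
    | G D B | G D B | n sig gs B h idx | n sig gs h idx | n sig gs B h idx | n G D B h];
    cbn [fst snd] in *; name_premises Hps IH.
  - apply (der_incl _ _ _ _ _ _ I1); [| | wf_solve | wf_solve];
      apply incl_app_app; try apply incl_refl.
    + intros x; now apply Permutation_in.
    + unfold rem; apply remove_incl; intros x; now apply Permutation_in.
  - destruct (form_eq_dec B A) as [<- | ne].
    + by_incl (principal_id ltac:(wf_solve)).
    + by_incl d.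
  - by_incl d.
  - by_incl I1.
  - by_incl I1.
  - by_incl I1.
  - by_incl I1.
  - discriminate.
  - by_rule (r_andL1 S false (G ++ Gx) (rem A D ++ Dx) B C) I1.
  - by_rule (r_andL2 S false (G ++ Gx) (rem A D ++ Dx) B C) I1.
  - destruct (form_eq_dec (And B C) A) as [<- | ne].
    + by_incl (principal_andR B C G D eq_refl ws I1 I2).
    + by_rule2 (r_andR S false (G ++ Gx) (rem A D ++ Dx) B C) I1 I2.
  - by_rule2 (r_orL S false (G ++ Gx) (rem A D ++ Dx) B C) I1 I2.
  - destruct (form_eq_dec (Or B C) A) as [<- | ne].
    + by_incl (principal_orR1 B C G D eq_refl ws I1).
    + by_rule (r_orR1 S false (G ++ Gx) (rem A D ++ Dx) B C) I1.
  - destruct (form_eq_dec (Or B C) A) as [<- | ne].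
    + by_incl (principal_orR2 B C G D eq_refl ws I1).
    + by_rule (r_orR2 S false (G ++ Gx) (rem A D ++ Dx) B C) I1.
  - by_rule2 (r_impL S false (G0 ++ Gx) (rem A D0 ++ Dx) (G1 ++ Gx) (rem A D1 ++ Dx) B C) I1 I2.
  - destruct (form_eq_dec (Imp B C) A) as [<- | ne].
    + by_incl (principal_impR B C G D eq_refl ws I1).
    + by_rule (r_impR S false (G ++ Gx) (rem A D ++ Dx) B C) I1.
  - by_rule (r_negL S false (G ++ Gx) (rem A D ++ Dx) B) I1.
  - destruct (form_eq_dec (Neg B) A) as [<- | ne].
    + by_incl (principal_negR B G D eq_refl ws I1).
    + by_rule (r_negR S false (G ++ Gx) (rem A D ++ Dx) B) I1.
  - destruct (form_eq_dec (Box n B) A) as [<- | ne].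
    + by_incl (principal_box n sig gs B eq_refl idx ws P1).
    + by_incl d.
  - by_incl d.
  - destruct (form_eq_dec (Box n B) A) as [<- | ne].
    + assert (P1' : Der S false (sig ++ unboxed_and_boxed gs, [B])) by by_incl P1.
      by_incl (principal_box n sig gs B eq_refl idx ws P1').
    + by_incl d.
  - by_rule (r_boxL S false n (G ++ Gx) (rem A D ++ Dx) B h) I1.
Qed.

End RemoveSuccedent.

Ltac not_principal := intros; in_elim; discriminate.

Lemma inv_andL S B C G D :
  wf B -> wf C -> Der S false (G, D) -> Der S false (B :: C :: rem (And B C) G, D).
Proof.
  intros wB wC d.
  enough (H : Der S false ([B; C] ++ rem (And B C) G, D ++ [])) by by_incl H.
  apply (remove_antecedent_occurrences S (And B C) [B; C] []); try not_principal.
  - wf_solve.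
  - wf_solve.
  - intros w; by_rule2 (r_andR S false [B; C] [] B C) (der_id S false B wB) (der_id S false C wC).
  - intros P Q G' D' [= <- <-] w d'; by_incl d'.
  - intros P Q G' D' [= <- <-] w d'; by_incl d'.
  - exact d.
Qed.

Lemma inv_orL1 S B C G D :
  wf B -> Der S false (G, D) -> Der S false (B :: rem (Or B C) G, D).
Proof.
  intros wB d.
  enough (H : Der S false ([B] ++ rem (Or B C) G, D ++ [])) by by_incl H.
  apply (remove_antecedent_occurrences S (Or B C) [B] []); try not_principal.
  - wf_solve.
  - wf_solve.
  - intros w; by_rule (r_orR1 S false [B] [] B C) (der_id S false B wB).
  - intros P Q G' D' [= <- <-] w d1 d2; by_incl d1.
  - exact d.
Qed.

Lemma inv_orL2 S B C G D :
  wf C -> Der S false (G, D) -> Der S false (C :: rem (Or B C) G, D).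
Proof.
  intros wC d.
  enough (H : Der S false ([C] ++ rem (Or B C) G, D ++ [])) by by_incl H.
  apply (remove_antecedent_occurrences S (Or B C) [C] []); try not_principal.
  - wf_solve.
  - wf_solve.
  - intros w; by_rule (r_orR2 S false [C] [] B C) (der_id S false C wC).
  - intros P Q G' D' [= <- <-] w d1 d2; by_incl d2.
  - exact d.
Qed.

Lemma inv_impL1 S B C G D :
  wf B -> Der S false (G, D) -> Der S false (rem (Imp B C) G, B :: D).
Proof.
  intros wB d.
  enough (H : Der S false ([] ++ rem (Imp B C) G, D ++ [B])) by by_incl H.
  apply (remove_antecedent_occurrences S (Imp B C) [] [B]); try not_principal.
  - wf_solve.
  - wf_solve.
  - intros w; by_rule (r_impR S false [] [B] B C) (der_id S false B wB).
  - intros P Q G0 D0 G1 D1 [= <- <-] w d1 d2; by_incl d1.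
  - exact d.
Qed.

Lemma inv_impL2 S B C G D :
  wf C -> Der S false (G, D) -> Der S false (C :: rem (Imp B C) G, D).
Proof.
  intros wC d.
  enough (H : Der S false ([C] ++ rem (Imp B C) G, D ++ [])) by by_incl H.
  apply (remove_antecedent_occurrences S (Imp B C) [C] []); try not_principal.
  - wf_solve.
  - wf_solve.
  - intros w; by_rule (r_impR S false [C] [] B C) (der_id S false C wC).
  - intros P Q G0 D0 G1 D1 [= <- <-] w d1 d2; by_incl d2.
  - exact d.
Qed.

Lemma inv_negL S B G D :
  wf B -> Der S false (G, D) -> Der S false (rem (Neg B) G, B :: D).
Proof.
  intros wB d.
  enough (H : Der S false ([] ++ rem (Neg B) G, D ++ [B])) by by_incl H.
  apply (remove_antecedent_occurrences S (Neg B) [] [B]); try not_principal.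
  - wf_solve.
  - wf_solve.
  - intros w; by_rule (r_negR S false [] [B] B) (der_id S false B wB).
  - intros P G' D' [= <-] w d'; by_incl d'.
  - exact d.
Qed.

Definition mix_admissible (S : system) (A : form) : Prop :=
  forall G0 D0 G1 D1, Der S false (G0, D0) -> Der S false (G1, D1) ->
  Der S false (G0 ++ rem A G1, rem A D0 ++ D1).

Lemma mix_box_principal S n B sig gs G D :
  mix_admissible S B -> idx_below n gs ->
  wf_seq (map (Box n) sig ++ boxed gs, [Box n B]) ->
  Der S false (sig ++ unboxed_and_boxed gs, [B]) ->
  Der S false (G, D) -> Der S false (map (Box n) sig ++ boxed gs ++ rem (Box n B) G, D).
Proof.
  intros mixB idx w dB d.
  enough (H : Der S false ((map (Box n) sig ++ boxed gs) ++ rem (Box n B) G, D ++ []))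
    by by_incl H.
  apply (remove_antecedent_occurrences S (Box n B) (map (Box n) sig ++ boxed gs) []);
    try not_principal.
  - wf_solve.
  - wf_solve.
  - intros _; exact (der_box_right S false n sig gs [B] I idx w dB).
  - intros n' P G' D' [= <- <-] hS _ d'.
    assert (dB' : Der S false (map (Box n) sig ++ boxed gs, [B])).
    { apply der_boxL_absorb with sig; [exact hS | intros x Hx; exists n; auto with mem |].
      by_incl (der_unbox_gammas S false sig gs [B] hS dB). }
    by_incl (mixB _ _ _ _ dB' d').
  - intros m sig' gs' Th hTh idx' Hin w' dprem dtraced.
    apply in_app_or in Hin as
      [(y & [= -> ->] & Hy)%in_map_iff | (k & g & Hkg & [= <- <-])%in_boxed].
    + (* [Box_n B] is a sigma-formula, so [m = n]: both contexts join one [Box_n] rule. *)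
      assert (HnB : ~ In (n, B) gs') by (intros H; apply (idx_below_lt _ _ _ _ idx') in H; lia).
      assert (idx2 : idx_below n (gs ++ gs')) by (apply Forall_app; auto).
      pose proof (mixB _ _ _ _ dB dprem) as dm.
      assert (dm' : Der S false ((sig ++ rem B sig') ++ unboxed_and_boxed (gs ++ gs'), Th))
        by by_incl dm.
      by_incl (der_box_right S false n (sig ++ rem B sig') (gs ++ gs') Th hTh idx2
                 ltac:(split; wf_solve) dm').
    + (* [Box_n B] is a gamma-formula, so [n < m]: the sigma-formulas [Box_n sigma] of the
         left context become gamma-formulas of the [Box_m] rule. *)
      assert (Hnm : n < m) by exact (idx_below_lt _ _ _ _ idx' Hkg).
      assert (Hmn : m <> n) by lia.
      assert (idx2 : idx_below m (with_index n sig ++ gs ++ remove_boxed (Box n B) gs')).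
      { apply Forall_app; split; [now apply idx_below_with_index|].
        apply Forall_app; split; [apply idx_below_mono with n; [lia | exact idx]|].
        now apply idx_below_remove_boxed. }
      pose proof (mixB _ _ _ _ dB dtraced) as dm.
      assert (dm' : Der S false
        (sig' ++ unboxed_and_boxed (with_index n sig ++ gs ++ remove_boxed (Box n B) gs'), Th))
        by by_incl dm.
      by_incl (der_box_right S false m sig' _ Th hTh idx2 ltac:(split; wf_solve) dm').
  - exact d.
Qed.

Inductive immediate_subformula : form -> form -> Prop :=
| isf_neg B : immediate_subformula B (Neg B)
| isf_andl B C : immediate_subformula B (And B C)
| isf_andr B C : immediate_subformula C (And B C)
| isf_orl B C : immediate_subformula B (Or B C)
| isf_orr B C : immediate_subformula C (Or B C)
| isf_impl B C : immediate_subformula B (Imp B C)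
| isf_impr B C : immediate_subformula C (Imp B C)
| isf_box n B : immediate_subformula B (Box n B).

Lemma mix_step S A :
  (forall B, immediate_subformula B A -> mix_admissible S B) -> mix_admissible S A.
Proof.
  intros IH G0 D0 G1 D1 d0 d1.
  apply (remove_succedent_occurrences S A (rem A G1) D1); [wf_solve | wf_solve | .. | exact d0].
  - intros wA; by_incl d1.
  - intros P Q G D -> w dP dQ.
    assert (wP : wf P) by wf_solve; assert (wQ : wf Q) by wf_solve.
    pose proof (IH Q (isf_andr P Q) _ _ _ _ dQ (inv_andL S P Q G1 D1 wP wQ d1)) as mQ.
    assert (mQ' : Der S false (P :: G ++ rem (And P Q) G1, rem (And P Q) D ++ D1))
      by by_incl mQ.
    by_incl (IH P (isf_andl P Q) _ _ _ _ dP mQ').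
  - intros P Q G D -> w dP.
    assert (wP : wf P) by wf_solve.
    by_incl (IH P (isf_orl P Q) _ _ _ _ dP (inv_orL1 S P Q G1 D1 wP d1)).
  - intros P Q G D -> w dQ.
    assert (wQ : wf Q) by wf_solve.
    by_incl (IH Q (isf_orr P Q) _ _ _ _ dQ (inv_orL2 S P Q G1 D1 wQ d1)).
  - intros P Q G D -> w dQ.
    assert (wP : wf P) by wf_solve; assert (wQ : wf Q) by wf_solve.
    pose proof (IH Q (isf_impr P Q) _ _ _ _ dQ (inv_impL2 S P Q G1 D1 wQ d1)) as mQ.
    assert (mQ' : Der S false (P :: G ++ rem (Imp P Q) G1, rem (Imp P Q) D ++ D1))
      by by_incl mQ.
    by_incl (IH P (isf_impl P Q) _ _ _ _ (inv_impL1 S P Q G1 D1 wP d1) mQ').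
  - intros P G D -> w dP.
    assert (wP : wf P) by wf_solve.
    by_incl (IH P (isf_neg P) _ _ _ _ (inv_negL S P G1 D1 wP d1) dP).
  - intros n sig gs C -> idx w dC.
    by_incl (mix_box_principal S n C sig gs G1 D1 (IH C (isf_box n C)) idx w dC d1).
Qed.

Lemma mix_admissible_all S A : mix_admissible S A.
Proof. induction A; apply mix_step; intros B HB; inversion HB; subst; assumption. Qed.

Lemma rule_cut_free_or_cut S ps s :
  Rule S true ps s ->
  Rule S false ps s \/
  exists G0 D0 G1 D1 A, ps = [(G0, D0 ++ [A]); (A :: G1, D1)] /\ s = (G0 ++ G1, D0 ++ D1).
Proof.
  destruct 1; try (right; do 5 eexists; split; reflexivity);
    left; solve [constructor; assumption].
Qed.

Theorem theorem3p8 :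
  forall (S : system) (s : sequent), Der S true s -> Der S false s.
Proof.
  intros S s d; induction d as [ps s r ws _ IH].
  destruct (rule_cut_free_or_cut S ps s r) as [r' | (G0 & D0 & G1 & D1 & A & -> & ->)].
  - exact (der S false ps s r' ws IH).
  - pose proof (IH _ (or_introl eq_refl)) as d0.
    pose proof (IH _ (or_intror (or_introl eq_refl))) as d1.
    by_incl (mix_admissible_all S A _ _ _ _ d0 d1).
Qed.
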